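(* Let $P(x)=x^\alpha=x_1^{\alpha_1}\cdots x_d^{\alpha_d}$ for $\alpha=(\alpha_1,\dots,\alpha_d)\in\mathbb{N}_0^d$ with $\|\alpha\|_1=k\ge2$. For any $W,L\in\mathbb{N}$ there exists a ReLU network $\phi:\mathbb{R}^d\to\mathbb{R}$, $\phi\in\mathcal{NN}(9W+k-1,(k-1)(L+1))$, such that for all $x,y\in[-1,1]^d$, $\phi(x)\in[-1,1]$ and $$|\phi(x)-P(x)|\le6(k-1)W^{-L},\qquad|\phi(x)-\phi(y)|\le7^{k-1}\|\alpha\|_\infty\|x-y\|_1.$$
   Context: $\sigma(x)=\max(x,0)$. $\mathcal{NN}(W,L)$: functions $\phi(x)=T_L(\sigma(T_{L-1}(\cdots\sigma(T_0(x))\cdots)))$ with affine maps $T_l$, ReLU componentwise, all hidden layer sizes $\le W$ and depth $\le L$. $\|\alpha\|_1=\sum_i\alpha_i$, $\|\alpha\|_\infty=\max_i\alpha_i$. *)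

From HB Require Import structures.
From mathcomp Require Import all_boot all_order all_algebra.
From mathcomp Require Import reals.
Set Implicit Arguments. Unset Strict Implicit. Unset Printing Implicit Defensive.
Import Order.TTheory GRing.Theory Num.Theory.
Local Open Scope ring_scope.

Definition relu {R : realType} (x : R) : R := Num.max x 0.

(* NNexact W Lh n f : f : R^n -> R is computed by a ReLU network with exactly
   Lh hidden (ReLU) layers, each of width <= W:
   f = T_Lh o sigma o T_{Lh-1} o ... o sigma o T_0, T_l affine. *)
Inductive NNexact {R : realType} (W : nat) : nat -> forall n : nat, ('cV[R]_n -> R) -> Prop :=
| NN_affine (n : nat) (A : 'rV[R]_n) (b : R) :
    NNexact W 0 (fun x : 'cV[R]_n => (A *m x) 0 0 + b)
| NN_layer (Lh n m : nat) (A : 'M[R]_(m, n)) (b : 'cV[R]_m) (f : 'cV[R]_m -> R) :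
    (m <= W)%N -> NNexact W Lh f ->
    NNexact W Lh.+1 (fun x : 'cV[R]_n => f (map_mx relu (A *m x + b))).

Definition NN {R : realType} (W L n : nat) (f : 'cV[R]_n -> R) : Prop :=
  exists2 Lh, (Lh <= L)%N & NNexact W Lh f.

Definition monomial {R : realType} (d : nat) (alpha : 'I_d -> nat) (x : 'cV[R]_d) : R :=
  \prod_(i < d) (x i 0) ^+ alpha i.

Definition norm1 {R : realType} (d : nat) (x : 'cV[R]_d) : R := \sum_(i < d) `|x i 0|.

Definition in_cube {R : realType} (d : nat) (x : 'cV[R]_d) : Prop :=
  forall i : 'I_d, -1 <= x i 0 <= 1.

From mathcomp Require Import all_boot all_order all_algebra reals.
From mathcomp Require Import boolp.
From mathcomp.algebra_tactics Require Import ring lra.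
From mathcomp Require Import zify.
Import Order.TTheory GRing.Theory Num.Theory.
Local Open Scope ring_scope.

(* Following Yarotsky, let Z be the N-tooth sawtooth on [0, 1], g t = t (1 - t), and I the
   piecewise-linear interpolant of g on the grid (1/N)Z. Then g - I = (g o Z) / N^2, so
   u^2 + N^(-2r) g (Z^r u), which is within N^(-2r)/4 of u^2 and 3-Lipschitz in u, is computed
   exactly by r ReLU layers of width N + 1. Polarisation, ab = (|a+b|/2)^2 - (|a-b|/2)^2, turns
   two such squarers into an approximate multiplier of depth L + 1. Listing the k factors of
   x^alpha, k - 1 multipliers chained along the list compute the monomial, while the remaining
   coordinates are carried through the ReLUs; the errors add up and the Lipschitz constants
   multiply. *)

Section Relu.
Context {R : realType}.
Implicit Types x : R.

Lemma ger0_relu x : 0 <= x -> relu x = x.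
Proof. by move=> x_ge0; apply/max_idPl. Qed.

Lemma ler0_relu x : x <= 0 -> relu x = 0.
Proof. by move=> x_le0; apply/max_idPr. Qed.

Lemma relu_ge0 x : 0 <= relu x.
Proof. by rewrite le_max lexx orbT. Qed.

Lemma relu_addN x : relu x + relu (- x) = `|x|.
Proof.
have [x_ge0 | x_lt0] := lerP 0 x.
  by rewrite ger0_relu // ler0_relu ?addr0 ?ger0_norm // oppr_le0.
by rewrite ler0_relu ?ltW // ger0_relu ?ltr0_norm ?add0r // oppr_ge0 ltW.
Qed.

End Relu.

Definition ramp {R : realType} (N i : nat) (z : R) : R := relu (z - i%:R / N%:R).

Definition saw_coef {R : realType} (N i : nat) : R :=
  if i == 0%N then N%:R else (-1) ^+ i * (2 * N%:R).

Definition sawtooth {R : realType} (N : nat) (z : R) : R :=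
  \sum_(i < N) saw_coef N i * ramp N i z.

Definition hump {R : realType} (t : R) : R := t * (1 - t).

Section Hump.
Context {R : realType}.
Implicit Types a b : R.

Lemma hump_lipschitz {a b} : 0 <= a <= 1 -> 0 <= b <= 1 ->
  `|hump a - hump b| <= `|a - b|.
Proof.
move=> /andP [a_ge0 a_le1] /andP [b_ge0 b_le1].
have -> : hump a - hump b = (a - b) * (1 - a - b) by rewrite /hump; ring.
rewrite normrM ler_piMr // ler_norml; apply/andP; split; lra.
Qed.

Lemma hump_bound {a} : 0 <= a <= 1 -> 0 <= hump a <= 1 / 4.
Proof.
move=> /andP [a_ge0 a_le1]; rewrite /hump mulr_ge0 ?subr_ge0 //=.
have : 0 <= (a - 1 / 2) ^+ 2 by rewrite sqr_ge0.
rewrite expr2; nra.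
Qed.

End Hump.

(* [hump_interp N] is the piecewise-linear interpolant of [hump] at the nodes i/N. *)
Definition interp_coef {R : realType} (N i : nat) : R :=
  if i == 0%N then (N%:R - 1) / N%:R else - (2 / N%:R).

Definition hump_interp {R : realType} (N : nat) (z : R) : R :=
  \sum_(i < N) interp_coef N i * ramp N i z.

Section Sawtooth.
Context {R : realType} {N : nat}.
Hypothesis N_gt0 : (0 < N)%N.
Local Notation Nr := (N%:R : R).
Implicit Types z : R.

Let Nr_gt0 : 0 < Nr. Proof. by rewrite ltr0n. Qed.
Let Nr_ge0 : 0 <= Nr. Proof. exact: ltW Nr_gt0. Qed.
Let Nr_neq0 : Nr != 0. Proof. by rewrite gt_eqF. Qed.

Let sub_divN (a b : R) : a - b / Nr = (Nr * a - b) / Nr.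
Proof. by field. Qed.

Lemma ramp_lin i z : i%:R <= Nr * z -> ramp N i z = z - i%:R / Nr.
Proof.
move=> le_iNz; rewrite /ramp ger0_relu // sub_divN.
by rewrite divr_ge0 ?subr_ge0.
Qed.

Lemma ramp_eq0 i z : Nr * z <= i%:R -> ramp N i z = 0.
Proof.
move=> le_Nzi; rewrite /ramp ler0_relu // sub_divN.
by rewrite pmulr_lle0 ?subr_le0 // invr_gt0.
Qed.

Lemma exists_cell {z} : 0 <= z <= 1 ->
  exists2 m, (m < N)%N & m%:R <= Nr * z <= m%:R + 1.
Proof.
move=> /andP [z_ge0 z_le1].
have Nz_ge0 : 0 <= Nr * z by rewrite mulr_ge0.
have Nz_leN : Nr * z <= Nr by rewrite ler_piMr.
have /andP [trunc_le lt_trunc] := truncn_itv Nz_ge0.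
have [trunc_ltN | N_le_trunc] := ltnP (Num.truncn (Nr * z)) N.
  by exists (Num.truncn (Nr * z)); rewrite // trunc_le /= natr1 ltW.
have NzE : Nr * z = Nr.
  by apply/eqP; rewrite eq_le Nz_leN (le_trans _ trunc_le) ?ler_nat.
exists N.-1; first by rewrite prednK.
by rewrite NzE natr1 prednK // lexx andbT ler_nat leq_pred.
Qed.

Lemma sum_ramp_cell (a : nat -> R) {z m} : (m < N)%N ->
  m%:R <= Nr * z <= m%:R + 1 ->
  \sum_(i < N) a i * ramp N i z = \sum_(i < m.+1) a i * (z - i%:R / Nr).
Proof.
move=> lt_mN /andP [m_le m_ge].
rewrite -(big_mkord xpredT (fun i => a i * ramp N i z)).
rewrite (big_cat_nat (leq0n m.+1) lt_mN) /= big_mkord.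
rewrite [X in _ + X]big_nat_cond [X in _ + X]big1 ?addr0 => [|i].
  apply: eq_bigr => i _; rewrite ramp_lin // (le_trans _ m_le) // ler_nat.
  by rewrite -ltnS.
move=> /andP [/andP [lt_mi _] _]; rewrite ramp_eq0 ?mulr0 //.
by rewrite (le_trans m_ge) // natr1 ler_nat.
Qed.

Lemma sum_saw_coef m z :
  \sum_(i < m.+1) saw_coef N i * (z - i%:R / Nr) =
  (-1) ^+ m * (Nr * z - m%:R) + (odd m)%:R.
Proof.
elim: m => [|m IH]; first by rewrite big_ord1 /saw_coef /=; field.
rewrite big_ord_recr /= IH /saw_coef /= -!natr1.
rewrite -[(-1) ^+ m]signr_odd -[(-1) ^+ m.+1]signr_odd oddS.
by case: (odd m) => /=; field.
Qed.

Lemma sum_interp_coef m z :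
  \sum_(i < m.+1) interp_coef N i * (z - i%:R / Nr) =
  ((Nr - 1 - 2 * m%:R) * z + m%:R * (m%:R + 1) / Nr) / Nr.
Proof.
elim: m => [|m IH]; first by rewrite big_ord1 /interp_coef /=; field.
by rewrite big_ord_recr /= IH /interp_coef /= -!natr1; field.
Qed.

Lemma sawtooth_cell {z m} : (m < N)%N -> m%:R <= Nr * z <= m%:R + 1 ->
  sawtooth N z = if odd m then m%:R + 1 - Nr * z else Nr * z - m%:R.
Proof.
move=> lt_mN hm; rewrite /sawtooth (sum_ramp_cell _ lt_mN hm) sum_saw_coef.
by rewrite -signr_odd; case: (odd m) => /=; ring.
Qed.

Lemma sawtooth_01 {z} : 0 <= z <= 1 -> 0 <= sawtooth N z <= 1.
Proof.
move=> /exists_cell [m lt_mN hm]; rewrite (sawtooth_cell lt_mN hm).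
by case/andP: hm => ? ?; case: (odd m); apply/andP; split; lra.
Qed.

Lemma hump_sub_interp {z} : 0 <= z <= 1 ->
  hump z - hump_interp N z = hump (sawtooth N z) / Nr ^+ 2.
Proof.
move=> /exists_cell [m lt_mN hm].
rewrite (sawtooth_cell lt_mN hm) /hump_interp (sum_ramp_cell _ lt_mN hm).
by rewrite sum_interp_coef /hump; case: (odd m); field.
Qed.

Lemma sawtooth_dist_even {z} : 0 <= z <= 1 -> exists a : nat,
  sawtooth N z = `|Nr * z - 2 * a%:R| /\
  forall b : nat, `|Nr * z - 2 * a%:R| <= `|Nr * z - 2 * b%:R|.
Proof.
move=> /exists_cell [m lt_mN hm]; exists (uphalf m).
have twice_uphalf : 2 * (uphalf m)%:R = m%:R + (odd m)%:R :> R.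
  have twice_uphalfn : (2 * uphalf m = m + odd m)%N by lia.
  by rewrite -natrD -twice_uphalfn natrM.
rewrite (sawtooth_cell lt_mN hm) twice_uphalf.
case/andP: hm => m_le m_ge.
have dist_le1 : `|Nr * z - (m%:R + (odd m)%:R)| <= 1.
  by rewrite ler_norml; case: (odd m); rewrite /= ?addr0; apply/andP; split; lra.
split.
  by case: (odd m); rewrite /= ?addr0; [rewrite ler0_norm | rewrite ger0_norm]; lra.
move=> b; have [->|ne_ba] := eqVneq b (uphalf m); first by rewrite twice_uphalf.
have gap : 1 <= `|b%:R - (uphalf m)%:R| :> R.
  have [lt_ba | lt_ab | eq_ba] := ltngtP b (uphalf m); last by rewrite eq_ba eqxx in ne_ba.
  - have le_b1a : b%:R + 1 <= (uphalf m)%:R :> R by rewrite natr1 ler_nat.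
    by rewrite ler0_norm; lra.
  - have le_a1b : (uphalf m)%:R + 1 <= b%:R :> R by rewrite natr1 ler_nat.
    by rewrite ger0_norm; lra.
have := ler_distD (Nr * z) (2 * b%:R) (2 * (uphalf m)%:R).
rewrite -mulrBr normrM ger0_norm // distrC twice_uphalf.
lra.
Qed.

Lemma sawtooth_lipschitz {z z'} : 0 <= z <= 1 -> 0 <= z' <= 1 ->
  `|sawtooth N z - sawtooth N z'| <= Nr * `|z - z'|.
Proof.
have half_bound a b : 0 <= a <= 1 -> 0 <= b <= 1 ->
    sawtooth N a - sawtooth N b <= Nr * `|a - b|.
  move=> a01 b01.
  have [a' [-> min_a']] := sawtooth_dist_even a01.
  have [b' [-> _]] := sawtooth_dist_even b01.
  have := ler_distD (Nr * b) (Nr * a) (2 * b'%:R).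
  rewrite -mulrBr normrM [`|Nr|]ger0_norm //.
  have := min_a' b'; lra.
move=> z01 z'01; rewrite ler_norml; apply/andP; split; last exact: half_bound.
by have := half_bound z' z z'01 z01; rewrite distrC; lra.
Qed.

Lemma sawtooth0 : sawtooth N 0 = 0 :> R.
Proof.
have zero01 : 0 <= (0 : R) <= 1 by rewrite lexx ler01.
have [a [-> min_a]] := sawtooth_dist_even zero01.
apply/eqP; rewrite eq_le normr_ge0 andbT (le_trans (min_a 0%N)) //.
by rewrite !mulr0 subrr normr0.
Qed.

Lemma sawtooth1 : sawtooth N 1 = 0 :> R \/ sawtooth N 1 = 1 :> R.
Proof.
have one01 : 0 <= (1 : R) <= 1 by rewrite lexx ler01.
have [m lt_mN hm] := exists_cell one01.
have mE : m%:R = Nr - 1.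
  have : m%:R + 1 <= Nr by rewrite natr1 ler_nat.
  by rewrite mulr1 in hm; case/andP: hm; lra.
rewrite (sawtooth_cell lt_mN hm) mE mulr1.
by case: (odd m); [left | right]; ring.
Qed.

End Sawtooth.

Definition saw_iter {R : realType} (N r : nat) (z : R) : R := iter r (sawtooth N) z.

Fixpoint approx_sq {R : realType} (N r : nat) (u : R) : R :=
  if r is r'.+1 then
    approx_sq N r' u - N%:R ^- (2 * r') * hump_interp N (saw_iter N r' u)
  else u.

Definition approx_mul {R : realType} (N L : nat) (a b : R) : R :=
  approx_sq N L (`|a + b| / 2) - approx_sq N L (`|a - b| / 2).

Lemma half_norm_01 {R : realType} {a b : R} : -1 <= a <= 1 -> -1 <= b <= 1 ->
  0 <= `|a + b| / 2 <= 1.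
Proof.
move=> /andP [? ?] /andP [? ?]; rewrite divr_ge0 //=.
by rewrite ler_pdivrMr // mul1r ler_norml; apply/andP; split; lra.
Qed.

Section Squaring.
Context {R : realType} {N : nat}.
Hypothesis N_gt0 : (0 < N)%N.
Local Notation Nr := (N%:R : R).
Implicit Types u z : R.

Let Nr_ge1 : 1 <= Nr. Proof. by rewrite ler1n. Qed.
Let Nr_neq0 : Nr != 0. Proof. by rewrite pnatr_eq0 -lt0n. Qed.

Let invX2_ge0 r : 0 <= Nr ^- (2 * r).
Proof. by rewrite invr_ge0 exprn_ge0 ?ler0n. Qed.

Let invX2_mulX_le1 r : Nr ^- (2 * r) * Nr ^+ r <= 1.
Proof.
have NrX_gt0 : 0 < Nr ^+ r by rewrite exprn_gt0 // (lt_le_trans ltr01).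
rewrite mulnC exprM expr2 invfM -mulrA mulVf ?gt_eqF // mulr1.
by rewrite invf_le1 // exprn_ege1.
Qed.

Lemma saw_iter_01 r {z} : 0 <= z <= 1 -> 0 <= saw_iter N r z <= 1.
Proof. by move=> z01; elim: r => [|r IH] //=; apply: sawtooth_01. Qed.

Lemma saw_iter_lipschitz r {z z'} : 0 <= z <= 1 -> 0 <= z' <= 1 ->
  `|saw_iter N r z - saw_iter N r z'| <= Nr ^+ r * `|z - z'|.
Proof.
move=> z01 z'01; elim: r => [|r IH]; first by rewrite expr0 mul1r.
apply: le_trans (sawtooth_lipschitz N_gt0 (saw_iter_01 r z01) (saw_iter_01 r z'01)) _.
by rewrite exprS -mulrA ler_wpM2l ?ler0n.
Qed.

Lemma saw_iter1 r : saw_iter N r 1 = 0 :> R \/ saw_iter N r 1 = 1 :> R.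
Proof.
elim: r => [|r IH]; first by right.
rewrite /saw_iter /= -/(saw_iter N r 1).
by case: IH => ->; [left; apply: sawtooth0 | apply: sawtooth1].
Qed.

Lemma approx_sqE r {u} : 0 <= u <= 1 ->
  approx_sq N r u = u ^+ 2 + Nr ^- (2 * r) * hump (saw_iter N r u).
Proof.
move=> u01; elim: r => [|r IH] /=; first by rewrite expr0 invr1 mul1r /hump; ring.
have := hump_sub_interp N_gt0 (saw_iter_01 r u01).
rewrite IH /saw_iter /= -/(saw_iter N r u) mulnS exprD => step.
have -> : hump_interp N (saw_iter N r u) =
    hump (saw_iter N r u) - hump (sawtooth N (saw_iter N r u)) / Nr ^+ 2.
  by rewrite -step; ring.
by field; rewrite expf_neq0.
Qed.

Lemma approx_sq_err r {u} : 0 <= u <= 1 ->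
  0 <= approx_sq N r u - u ^+ 2 <= Nr ^- (2 * r) / 4.
Proof.
move=> u01; rewrite approx_sqE // addrC addKr.
have /andP [hump_ge0 hump_le] := hump_bound (saw_iter_01 r u01).
rewrite mulr_ge0 //=.
by apply: le_trans (ler_wpM2l (invX2_ge0 r) hump_le) _; rewrite mul1r.
Qed.

Lemma approx_sq_ge0 r {u} : 0 <= u <= 1 -> 0 <= approx_sq N r u.
Proof.
move=> u01; have /andP [err_ge0 _] := approx_sq_err r u01.
by rewrite -(subrK (u ^+ 2) (approx_sq N r u)) addr_ge0 ?sqr_ge0.
Qed.

(* [hump] vanishes at the images of 1, so the Lipschitz bound of the iterates caps the
   correction term by 1 - u. *)
Lemma approx_sq_le1 r {u} : 0 <= u <= 1 -> approx_sq N r u <= 1.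
Proof.
move=> u01; rewrite approx_sqE //.
have one01 : 0 <= (1 : R) <= 1 by rewrite lexx ler01.
have hump_le : hump (saw_iter N r u) <= Nr ^+ r * (1 - u).
  have := hump_lipschitz (saw_iter_01 r u01) (saw_iter_01 r one01).
  have -> : hump (saw_iter N r (1 : R)) = 0 by case: (saw_iter1 r) => ->; rewrite /hump; ring.
  rewrite subr0 => /(le_trans (ler_norm _)) /le_trans; apply.
  apply: le_trans (saw_iter_lipschitz r u01 one01) _.
  by rewrite distrC ger0_norm // subr_ge0; case/andP: u01.
have := ler_wpM2l (invX2_ge0 r) hump_le; rewrite mulrA.
have := invX2_mulX_le1 r; have := invX2_ge0 r.
case/andP: u01 => u_ge0 u_le1; rewrite expr2; nra.
Qed.

Lemma approx_sq_lipschitz r {u u'} : 0 <= u <= 1 -> 0 <= u' <= 1 ->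
  `|approx_sq N r u - approx_sq N r u'| <= 3 * `|u - u'|.
Proof.
move=> u01 u'01; rewrite !approx_sqE //.
set s := Nr ^- (2 * r).
have -> : u ^+ 2 + s * hump (saw_iter N r u) - (u' ^+ 2 + s * hump (saw_iter N r u')) =
    (u - u') * (u + u') + s * (hump (saw_iter N r u) - hump (saw_iter N r u')) by ring.
apply: le_trans (ler_normD _ _) _.
have sq_part : `|(u - u') * (u + u')| <= 2 * `|u - u'|.
  rewrite normrM mulrC ler_wpM2r // ger0_norm.
    by case/andP: u01; case/andP: u'01; lra.
  by case/andP: u01; case/andP: u'01; lra.
have hump_part : `|s * (hump (saw_iter N r u) - hump (saw_iter N r u'))| <= `|u - u'|.
  rewrite normrM (ger0_norm (invX2_ge0 r)).
  have := hump_lipschitz (saw_iter_01 r u01) (saw_iter_01 r u'01).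
  move=> /(ler_wpM2l (invX2_ge0 r)) /le_trans; apply.
  apply: le_trans (ler_wpM2l (invX2_ge0 r) (saw_iter_lipschitz r u01 u'01)) _.
  by rewrite mulrA ler_piMl.
lra.
Qed.

Section Multiplication.
Variable L : nat.
Implicit Types a b : R.

Let neg_11 {b} : -1 <= b <= 1 -> -1 <= - b <= 1.
Proof. by case/andP=> ? ?; apply/andP; split; lra. Qed.

Lemma approx_mul_range [a b] : -1 <= a <= 1 -> -1 <= b <= 1 ->
  -1 <= approx_mul N L a b <= 1.
Proof.
move=> a11 b11.
have sum01 := half_norm_01 a11 b11; have diff01 := half_norm_01 a11 (neg_11 b11).
have := approx_sq_ge0 L sum01; have := approx_sq_le1 L sum01.
have := approx_sq_ge0 L diff01; have := approx_sq_le1 L diff01.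
by rewrite /approx_mul; move=> ? ? ? ?; apply/andP; split; lra.
Qed.

Lemma approx_mul_err [a b] : -1 <= a <= 1 -> -1 <= b <= 1 ->
  `|approx_mul N L a b - a * b| <= Nr ^- (2 * L) / 4.
Proof.
move=> a11 b11.
have := approx_sq_err L (half_norm_01 a11 b11).
have := approx_sq_err L (half_norm_01 a11 (neg_11 b11)).
have polarization : a * b = (`|a + b| / 2) ^+ 2 - (`|a - b| / 2) ^+ 2.
  by rewrite !expr_div_n !real_normK ?num_real //; field.
rewrite /approx_mul polarization ler_norml => /andP [? ?] /andP [? ?].
by apply/andP; split; lra.
Qed.

Lemma approx_mul_lipschitz [a b a' b'] : -1 <= a <= 1 -> -1 <= b <= 1 ->
  -1 <= a' <= 1 -> -1 <= b' <= 1 ->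
  `|approx_mul N L a b - approx_mul N L a' b'| <= 3 * (`|a - a'| + `|b - b'|).
Proof.
move=> a11 b11 a'11 b'11.
have half_dist (c c' : R) : `|c / 2 - c' / 2| <= `|c - c'| / 2.
  by rewrite -mulrBl normrM [`|2^-1|]ger0_norm // invr_ge0.
have sum_dist : `| `|a + b| - `|a' + b'| | <= `|a - a'| + `|b - b'|.
  apply: le_trans (ler_dist_dist _ _) _.
  by rewrite (_ : a + b - (a' + b') = (a - a') + (b - b')) ?ler_normD //; ring.
have diff_dist : `| `|a - b| - `|a' - b'| | <= `|a - a'| + `|b - b'|.
  apply: le_trans (ler_dist_dist _ _) _.
  by rewrite (_ : a - b - (a' - b') = (a - a') - (b - b')) ?ler_normB //; ring.
have := approx_sq_lipschitz L (half_norm_01 a11 b11) (half_norm_01 a'11 b'11).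
have := approx_sq_lipschitz L (half_norm_01 a11 (neg_11 b11))
  (half_norm_01 a'11 (neg_11 b'11)).
have := half_dist `|a + b| `|a' + b'|; have := half_dist `|a - b| `|a' - b'|.
rewrite /approx_mul.
set Su := approx_sq N L (`|a + b| / 2); set Su' := approx_sq N L (`|a' + b'| / 2).
set Sv := approx_sq N L (`|a - b| / 2); set Sv' := approx_sq N L (`|a' - b'| / 2).
move=> ? ? ? ?; have := ler_normB (Su - Su') (Sv - Sv').
rewrite (_ : Su - Sv - (Su' - Sv') = Su - Su' - (Sv - Sv')); last by ring.
lra.
Qed.

End Multiplication.
End Squaring.

Definition affine {R : realType} {n m} (G : 'cV[R]_n -> 'cV[R]_m) : Prop :=
  exists A b, forall x, G x = A *m x + b.

Definition affine_form {R : realType} {n} (f : 'cV[R]_n -> R) : Prop :=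
  exists (a : 'rV[R]_n) c, forall x, f x = (a *m x) 0 0 + c.

Section AffineMaps.
Context {R : realType}.

Lemma affine_id n : affine (fun x : 'cV[R]_n => x).
Proof. by exists 1%:M, 0 => x; rewrite mul1mx addr0. Qed.

Lemma affine_comp {n p m} {P : 'cV[R]_n -> 'cV[R]_p} {G : 'cV[R]_p -> 'cV[R]_m} :
  affine P -> affine G -> affine (fun x => G (P x)).
Proof.
move=> [A [b PE]] [B [c GE]]; exists (B *m A), (B *m b + c) => x.
by rewrite GE PE mulmxDr mulmxA addrA.
Qed.

Lemma affine_col_mx {n m1 m2} {G1 : 'cV[R]_n -> 'cV[R]_m1} {G2 : 'cV[R]_n -> 'cV[R]_m2} :
  affine G1 -> affine G2 -> affine (fun x => col_mx (G1 x) (G2 x)).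
Proof.
move=> [A1 [b1 G1E]] [A2 [b2 G2E]]; exists (col_mx A1 A2), (col_mx b1 b2) => x.
by rewrite G1E G2E mul_col_mx add_col_mx.
Qed.

Lemma affine_form_ext {n} {f g : 'cV[R]_n -> R} :
  affine_form f -> f =1 g -> affine_form g.
Proof. by move=> [a [c fE]] fg; exists a, c => x; rewrite -fg fE. Qed.

Lemma affine_of_forms {n m} {G : 'cV[R]_n -> 'cV[R]_m} :
  (forall i, affine_form (fun x => G x i 0)) -> affine G.
Proof.
move=> /fin_all_exists [a /fin_all_exists [c GE]].
exists (\matrix_(i, j) a i 0 j), (\col_i c i) => x.
apply/matrixP => i j; rewrite (ord1 j) GE !mxE; congr (_ + _).
by apply: eq_bigr => l _; rewrite [X in _ = X * _]mxE.
Qed.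

Lemma affine_col_fun {n m} {f : 'I_m -> 'cV[R]_n -> R} :
  (forall i, affine_form (f i)) -> affine (fun x => \col_i f i x).
Proof.
move=> f_aff; apply: affine_of_forms => i.
by apply: affine_form_ext (f_aff i) _ => x; rewrite mxE.
Qed.

Lemma affine_form_cst {n} (c : R) : affine_form (fun _ : 'cV[R]_n => c).
Proof. by exists 0, c => x; rewrite mul0mx mxE add0r. Qed.

Lemma affine_form_entry {n m} {G : 'cV[R]_n -> 'cV[R]_m} (i : 'I_m) :
  affine G -> affine_form (fun x => G x i 0).
Proof. by move=> [A [b GE]]; exists (row i A), (b i 0) => x; rewrite GE -row_mul !mxE. Qed.

Lemma affine_form_coord {n} (i : 'I_n) : affine_form (fun x : 'cV[R]_n => x i 0).
Proof. exact: affine_form_entry i (affine_id n). Qed.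

Lemma affine_formD {n} {f g : 'cV[R]_n -> R} :
  affine_form f -> affine_form g -> affine_form (fun x => f x + g x).
Proof.
move=> [a [c fE]] [a' [c' gE]]; exists (a + a'), (c + c') => x.
by rewrite fE gE mulmxDl [X in _ = X + _]mxE addrACA.
Qed.

Lemma affine_formZ {n} (k : R) {f : 'cV[R]_n -> R} :
  affine_form f -> affine_form (fun x => k * f x).
Proof.
move=> [a [c fE]]; exists (k *: a), (k * c) => x.
by rewrite fE -scalemxAl [X in _ = X + _]mxE mulrDr.
Qed.

Lemma affine_formB {n} {f g : 'cV[R]_n -> R} :
  affine_form f -> affine_form g -> affine_form (fun x => f x - g x).
Proof.
move=> f_aff /(affine_formZ (-1)) g_aff.
by apply: affine_form_ext (affine_formD f_aff g_aff) _ => x; rewrite mulN1r.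
Qed.

Lemma affine_form_sum {n p} (F : 'I_p -> 'cV[R]_n -> R) :
  (forall j, affine_form (F j)) -> affine_form (fun x => \sum_(j < p) F j x).
Proof.
elim: p F => [|p IH] F F_aff.
  by apply: affine_form_ext (affine_form_cst 0) _ => x; rewrite big_ord0.
apply: affine_form_ext (affine_formD (IH _ (fun j => F_aff (widen_ord (leqnSn p) j)))
  (F_aff ord_max)) _.
by move=> x; rewrite big_ord_recr.
Qed.

Lemma affine_usubmx n1 n2 : affine (fun x : 'cV[R]_(n1 + n2) => usubmx x).
Proof.
apply: affine_of_forms => i.
by apply: affine_form_ext (affine_form_coord (lshift n2 i)) _ => x; rewrite mxE.
Qed.

Lemma affine_dsubmx n1 n2 : affine (fun x : 'cV[R]_(n1 + n2) => dsubmx x).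
Proof.
apply: affine_of_forms => i.
by apply: affine_form_ext (affine_form_coord (rshift n1 i)) _ => x; rewrite mxE.
Qed.

End AffineMaps.

(* Vector-valued counterpart of [NNexact], so that networks can be composed. *)
Inductive NNvec {R : realType} (W : nat) :
    nat -> forall n m : nat, ('cV[R]_n -> 'cV[R]_m) -> Prop :=
| NNvec_affine n m (A : 'M[R]_(m, n)) (b : 'cV[R]_m) :
    NNvec W 0 n m (fun x => A *m x + b)
| NNvec_layer Lh n p m (A : 'M[R]_(p, n)) (b : 'cV[R]_p) (G : 'cV[R]_p -> 'cV[R]_m) :
    (p <= W)%N -> NNvec W Lh p m G ->
    NNvec W Lh.+1 n m (fun x => G (map_mx relu (A *m x + b))).
Arguments NNvec {R} W _ {n m} _.
Arguments NNvec_affine {R} W {n m}.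
Arguments NNvec_layer {R W Lh n p m} A b {G}.

Section VectorNetworks.
Context {R : realType}.

Lemma NNvec_ext {W Lh n m} {F G : 'cV[R]_n -> 'cV[R]_m} :
  NNvec W Lh F -> F =1 G -> NNvec W Lh G.
Proof. by move=> F_net /funext <-. Qed.

Lemma NNvec_of_affine W {n m} {G : 'cV[R]_n -> 'cV[R]_m} : affine G -> NNvec W 0 G.
Proof. by move=> [A [b GE]]; apply: NNvec_ext (NNvec_affine W A b) _ => x; rewrite GE. Qed.

Lemma NNvec_comp_affine {W Lh p m} {G : 'cV[R]_p -> 'cV[R]_m} {n}
    {P : 'cV[R]_n -> 'cV[R]_p} :
  NNvec W Lh G -> affine P -> NNvec W Lh (fun x => G (P x)).
Proof.
move=> G_net; elim: G_net n P => {Lh p m G} [p m A b | Lh p q m A b G le_qW G_net _] n P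
  [B [c PE]].
  apply: NNvec_ext (NNvec_affine W (A *m B) (A *m c + b)) _ => x.
  by rewrite PE mulmxDr mulmxA addrA.
apply: NNvec_ext (NNvec_layer (A *m B) (A *m c + b) le_qW G_net) _ => x /=.
by rewrite PE mulmxDr mulmxA addrA.
Qed.

Lemma NNvec_comp {W L1 L2 n p m} {F : 'cV[R]_n -> 'cV[R]_p} {G : 'cV[R]_p -> 'cV[R]_m} :
  NNvec W L1 F -> NNvec W L2 G -> NNvec W (L1 + L2) (fun x => G (F x)).
Proof.
move=> F_net; elim: F_net m G => {L1 n p F} [n p A b | L1 n q p A b F le_qW _ IH] m G G_net.
  by rewrite add0n; apply: NNvec_comp_affine G_net _; exists A, b.
by rewrite addSn; apply: NNvec_layer le_qW (IH _ _ G_net).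
Qed.

Lemma NNvec_relu_affine {W n p} {P : 'cV[R]_n -> 'cV[R]_p} :
  affine P -> (p <= W)%N -> NNvec W 1 (fun x => map_mx relu (P x)).
Proof.
move=> [A [b PE]] le_pW.
apply: NNvec_ext (NNvec_layer A b le_pW (NNvec_affine W 1%:M 0)) _ => x.
by rewrite mul1mx addr0 PE.
Qed.

Lemma NNexact_form_comp {W Lh n m} {F : 'cV[R]_n -> 'cV[R]_m} (a : 'rV[R]_m) (c : R) :
  NNvec W Lh F -> NNexact W Lh (fun x => (a *m F x) 0 0 + c).
Proof.
move=> F_net; elim: F_net a c => {Lh n m F} [n m A b | Lh n p m A b G le_pW _ IH] a c.
  have -> : (fun x : 'cV[R]_n => (a *m (A *m x + b)) 0 0 + c) =
      (fun x => ((a *m A) *m x) 0 0 + ((a *m b) 0 0 + c)).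
    by apply: funext => x; rewrite mulmxDr mulmxA [in LHS]mxE addrA.
  exact: NN_affine.
exact: (NN_layer A b le_pW (IH a c)).
Qed.

Lemma NNexact_entry {W Lh n m} {F : 'cV[R]_n -> 'cV[R]_m} (i : 'I_m) :
  NNvec W Lh F -> NNexact W Lh (fun x => F x i 0).
Proof.
move=> /(NNexact_form_comp (row i 1%:M) 0).
have -> // : (fun x => (row i 1%:M *m F x) 0 0 + 0) = (fun x => F x i 0).
by apply: funext => x; rewrite addr0 -row_mul mul1mx mxE.
Qed.

Lemma NNexact_widen {W W' Lh n} {f : 'cV[R]_n -> R} :
  (W <= W')%N -> NNexact W Lh f -> NNexact W' Lh f.
Proof.
move=> le_WW'; elim=> {Lh n f} [n A b | Lh n m A b f le_mW _ IH].
  exact: NN_affine.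
exact: (NN_layer A b (leq_trans le_mW le_WW') IH).
Qed.

Lemma NN_mono {W W' L L' n} {f : 'cV[R]_n -> R} :
  (W <= W')%N -> (L <= L')%N -> NN W L f -> NN W' L' f.
Proof.
move=> le_WW' le_LL' [Lh le_LhL f_net]; exists Lh; first exact: leq_trans le_LL'.
exact: NNexact_widen f_net.
Qed.

End VectorNetworks.

Section MulBlock.
Context {R : realType}.
Variables (N L k : nat) (ja jb : 'I_k).
Hypotheses (N_gt0 : (0 < N)%N) (L_gt0 : (0 < L)%N).

Local Notation chain := 'cV[R]_(1 + N).
Local Notation state := 'cV[R]_(k + ((1 + N) + (1 + N))).
Local Notation rl v := (map_mx relu v).

(* A squaring chain holds its accumulator on top of the N ramps of the current iterate. *)
Definition chain_head (c : chain) : R := usubmx c 0 0.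
Definition chain_ramps (c : chain) : 'cV[R]_N := dsubmx c.
Definition saw_of_ramps (t : 'cV[R]_N) : R := \sum_(i < N) saw_coef N i * t i 0.
Definition interp_of_ramps (t : 'cV[R]_N) : R := \sum_(i < N) interp_coef N i * t i 0.

Definition chain_pre (a z : R) : chain :=
  col_mx (\col_(i < 1) a) (\col_(i < N) (z - i%:R / N%:R)).

Definition chain_state (r : nat) (u : R) : chain :=
  col_mx (\col_(i < 1) approx_sq N r u) (\col_(i < N) ramp N i (saw_iter N r u)).

Definition chain_step (r : nat) (c : chain) : chain :=
  chain_pre (chain_head c - N%:R ^- (2 * r) * interp_of_ramps (chain_ramps c))
            (saw_of_ramps (chain_ramps c)).

(* After the ReLU, [abs_pre w] holds relu w and N copies of relu (- w); averaging the
   copies lets the first layer of a chain compute |w|/2 within the chain's own width. *)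
Definition abs_pre (w : R) : chain := col_mx (\col_(i < 1) w) (\col_(i < N) - w).
Definition half_abs (c : chain) : R :=
  (chain_head c + (\sum_(i < N) chain_ramps c i 0) / N%:R) / 2.

Definition mk_state (carry : 'cV[R]_k) (U V : chain) : state := col_mx carry (col_mx U V).
Definition carry (h : state) : 'cV[R]_k := usubmx h.
Definition chainU (h : state) : chain := usubmx (dsubmx h).
Definition chainV (h : state) : chain := dsubmx (dsubmx h).

(* The carried coordinates are shifted by 1, which keeps them nonnegative on the cube. *)
Definition block_in (s : 'cV[R]_k) : state :=
  mk_state (\col_i (s i 0 + 1)) (abs_pre (s ja 0 + s jb 0)) (abs_pre (s ja 0 - s jb 0)).

Definition block_init (h : state) : state :=
  mk_state (carry h) (chain_pre (half_abs (chainU h)) (half_abs (chainU h)))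
    (chain_pre (half_abs (chainV h)) (half_abs (chainV h))).

Definition block_step (r : nat) (h : state) : state :=
  mk_state (carry h) (chain_step r (chainU h)) (chain_step r (chainV h)).

Definition block_out (h : state) : 'cV[R]_k :=
  \col_i (if i == jb then chain_head (chain_step L.-1 (chainU h)) -
                          chain_head (chain_step L.-1 (chainV h))
          else carry h i 0 - 1).

Fixpoint block_hidden (r : nat) (s : 'cV[R]_k) : state :=
  if r is r'.+1 then rl (block_step r' (block_hidden r' s))
  else rl (block_init (rl (block_in s))).

Definition mul_block (s : 'cV[R]_k) : 'cV[R]_k := block_out (block_hidden L.-1 s).

Lemma affine_form_chain_head {n} {P : 'cV[R]_n -> chain} :
  affine P -> affine_form (fun x => chain_head (P x)).
Proof. by move=> P_aff; apply: affine_form_entry (affine_comp P_aff (affine_usubmx 1 N)). Qed.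

Lemma affine_form_chain_ramp {n} {P : 'cV[R]_n -> chain} (i : 'I_N) :
  affine P -> affine_form (fun x => chain_ramps (P x) i 0).
Proof. by move=> P_aff; apply: affine_form_entry (affine_comp P_aff (affine_dsubmx 1 N)). Qed.

Lemma affine_form_ramp_sum {n} (a : 'I_N -> R) {P : 'cV[R]_n -> chain} :
  affine P -> affine_form (fun x => \sum_(i < N) a i * chain_ramps (P x) i 0).
Proof.
by move=> P_aff; apply: affine_form_sum => i; apply/affine_formZ/affine_form_chain_ramp.
Qed.

Lemma affine_chain_pre {n} {f g : 'cV[R]_n -> R} :
  affine_form f -> affine_form g -> affine (fun x => chain_pre (f x) (g x)).
Proof.
move=> f_aff g_aff; apply: affine_col_mx; apply: affine_col_fun => i //.
exact: affine_formB g_aff (affine_form_cst _).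
Qed.

Lemma affine_abs_pre {n} {f : 'cV[R]_n -> R} :
  affine_form f -> affine (fun x => abs_pre (f x)).
Proof.
move=> f_aff; apply: affine_col_mx; apply: affine_col_fun => i //.
exact: affine_form_ext (affine_formZ (-1) f_aff) (fun x => mulN1r _).
Qed.

Lemma affine_mk_state {n} {c : 'cV[R]_n -> 'cV[R]_k} {U V : 'cV[R]_n -> chain} :
  affine c -> affine U -> affine V -> affine (fun x => mk_state (c x) (U x) (V x)).
Proof. by move=> c_aff U_aff V_aff; apply: affine_col_mx => //; apply: affine_col_mx. Qed.

Lemma affine_chainU : affine chainU.
Proof. exact: affine_comp (affine_dsubmx _ _) (affine_usubmx _ _). Qed.

Lemma affine_chainV : affine chainV.
Proof. exact: affine_comp (affine_dsubmx _ _) (affine_dsubmx _ _). Qed.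

Lemma affine_form_half_abs {n} {P : 'cV[R]_n -> chain} :
  affine P -> affine_form (fun x => half_abs (P x)).
Proof.
move=> P_aff; apply: affine_form_ext (affine_formZ (2^-1) (affine_formD
  (affine_form_chain_head P_aff) (affine_form_ramp_sum (fun=> N%:R^-1) P_aff))) _ => x.
by rewrite /half_abs -mulr_sumr mulrC [_ / N%:R]mulrC.
Qed.

Lemma affine_chain_step r {n} {P : 'cV[R]_n -> chain} :
  affine P -> affine (fun x => chain_step r (P x)).
Proof.
move=> P_aff; apply: affine_chain_pre; last exact: affine_form_ramp_sum.
exact: affine_formB (affine_form_chain_head P_aff)
  (affine_formZ _ (affine_form_ramp_sum _ P_aff)).
Qed.

Lemma affine_block_in : affine block_in.
Proof.
apply: affine_mk_state.
- by apply: affine_col_fun => i; apply: affine_formD (affine_form_coord _) (affine_form_cst _).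
- by apply/affine_abs_pre/affine_formD; apply: affine_form_coord.
- by apply/affine_abs_pre/affine_formB; apply: affine_form_coord.
Qed.

Lemma affine_block_init : affine block_init.
Proof.
by apply: affine_mk_state (affine_usubmx _ _) _ _; apply: affine_chain_pre;
  apply: affine_form_half_abs; [exact: affine_chainU | exact: affine_chainU
  | exact: affine_chainV | exact: affine_chainV].
Qed.

Lemma affine_block_step r : affine (block_step r).
Proof.
apply: affine_mk_state (affine_usubmx _ _) _ _; apply: affine_chain_step.
  exact: affine_chainU.
exact: affine_chainV.
Qed.

Lemma affine_block_out : affine block_out.
Proof.
apply: affine_col_fun => i; case: (i == jb).
  by apply: affine_formB; apply/affine_form_chain_head/affine_chain_step;
    [exact: affine_chainU | exact: affine_chainV].
exact: affine_formB (affine_form_entry _ (affine_usubmx _ _)) (affine_form_cst _).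
Qed.

Local Notation width := (k + ((1 + N) + (1 + N)))%N.

Lemma NNvec_block_hidden r : NNvec width r.+2 (block_hidden r).
Proof.
elim: r => [|r IH] /=.
  exact: NNvec_comp (NNvec_relu_affine affine_block_in (leqnn _))
                    (NNvec_relu_affine affine_block_init (leqnn _)).
by have := NNvec_comp IH (NNvec_relu_affine (affine_block_step r) (leqnn _)); rewrite addn1.
Qed.

Lemma NNvec_mul_block : NNvec width L.+1 mul_block.
Proof.
have := NNvec_comp (NNvec_block_hidden L.-1) (NNvec_of_affine width affine_block_out).
by rewrite addn0 prednK.
Qed.

Lemma map_relu_idem {m} (v : 'cV[R]_m) : rl (rl v) = rl v.
Proof. by apply/matrixP => i j; rewrite !mxE ger0_relu // relu_ge0. Qed.

Lemma map_relu_col {m} (f : 'I_m -> R) : rl (\col_i f i) = \col_i relu (f i).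
Proof. by apply/matrixP => i j; rewrite !mxE. Qed.

Lemma relu_chain_pre a z :
  rl (chain_pre a z) = col_mx (\col_(i < 1) relu a) (\col_(i < N) ramp N i z).
Proof. by rewrite map_col_mx !map_relu_col. Qed.

Lemma chain_head_state r u : chain_head (chain_state r u) = approx_sq N r u.
Proof. by rewrite /chain_head col_mxKu mxE. Qed.

Lemma saw_of_state r u : saw_of_ramps (chain_ramps (chain_state r u)) = saw_iter N r.+1 u.
Proof. by rewrite /saw_of_ramps /chain_ramps col_mxKd; apply: eq_bigr => i _; rewrite mxE. Qed.

Lemma interp_of_state r u :
  interp_of_ramps (chain_ramps (chain_state r u)) = hump_interp N (saw_iter N r u).
Proof.
by rewrite /interp_of_ramps /chain_ramps col_mxKd; apply: eq_bigr => i _; rewrite mxE.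
Qed.

Lemma chain_head_step r u : chain_head (chain_step r (chain_state r u)) = approx_sq N r.+1 u.
Proof.
by rewrite /chain_head col_mxKu mxE -/(chain_head _) chain_head_state interp_of_state.
Qed.

Lemma relu_chain_step r u : 0 <= u <= 1 ->
  rl (chain_step r (chain_state r u)) = chain_state r.+1 u.
Proof.
move=> u01; rewrite relu_chain_pre -/(chain_head _) chain_head_state interp_of_state.
by rewrite saw_of_state ger0_relu //; apply: (approx_sq_ge0 N_gt0 r.+1 u01).
Qed.

Lemma relu_chain_init u : 0 <= u -> rl (chain_pre u u) = chain_state 0 u.
Proof. by move=> u_ge0; rewrite relu_chain_pre ger0_relu. Qed.

Lemma half_abs_relu w : half_abs (rl (abs_pre w)) = `|w| / 2.
Proof.
rewrite /half_abs /chain_head /chain_ramps map_col_mx col_mxKu col_mxKd !map_relu_col mxE.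
under eq_bigr do rewrite mxE.
rewrite sumr_const card_ord -mulr_natr -relu_addN; congr (_ / 2); field.
by rewrite pnatr_eq0 -lt0n.
Qed.

Lemma carry_mk_state c U V : carry (mk_state c U V) = c.
Proof. exact: col_mxKu. Qed.

Lemma chainU_mk_state c U V : chainU (mk_state c U V) = U.
Proof. by rewrite /chainU col_mxKd col_mxKu. Qed.

Lemma chainV_mk_state c U V : chainV (mk_state c U V) = V.
Proof. by rewrite /chainV col_mxKd col_mxKd. Qed.

Lemma relu_mk_state c U V : rl (mk_state c U V) = mk_state (rl c) (rl U) (rl V).
Proof. by rewrite /mk_state !map_col_mx. Qed.

Lemma block_hiddenE r (s : 'cV[R]_k) : in_cube s ->
  block_hidden r s = mk_state (rl (\col_i (s i 0 + 1)))
    (chain_state r (`|s ja 0 + s jb 0| / 2)) (chain_state r (`|s ja 0 - s jb 0| / 2)).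
Proof.
move=> s_cube.
have sum01 := half_norm_01 (s_cube ja) (s_cube jb).
have diff01 : 0 <= `|s ja 0 - s jb 0| / 2 <= 1.
  by apply: half_norm_01 (s_cube ja) _; case/andP: (s_cube jb) => ? ?; apply/andP; split; lra.
elim: r => [|r IH] /=.
  rewrite [rl (block_in s)]relu_mk_state /block_init carry_mk_state.
  rewrite chainU_mk_state chainV_mk_state !half_abs_relu relu_mk_state map_relu_idem.
  rewrite !relu_chain_init //.
    by case/andP: diff01.
  by case/andP: sum01.
by rewrite IH /block_step carry_mk_state chainU_mk_state chainV_mk_state relu_mk_state
  map_relu_idem !relu_chain_step.
Qed.

Lemma mul_blockE (s : 'cV[R]_k) : in_cube s ->
  mul_block s = \col_i (if i == jb then approx_mul N L (s ja 0) (s jb 0) else s i 0).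
Proof.
move=> s_cube; rewrite /mul_block block_hiddenE // /block_out carry_mk_state.
rewrite chainU_mk_state chainV_mk_state !chain_head_step prednK //.
apply/matrixP => i j; rewrite !mxE; case: (i == jb) => //.
by rewrite ger0_relu ?addrK //; case/andP: (s_cube i) => ? ?; lra.
Qed.

End MulBlock.

Fixpoint chain_prod {R : realType} (mul : R -> R -> R) (y : nat -> R) (j : nat) : R :=
  if j is j'.+1 then mul (chain_prod mul y j') (y j) else y 0%N.

Definition cube_upto {R : realType} (y : nat -> R) (j : nat) : Prop :=
  forall i, (i <= j)%N -> -1 <= y i <= 1.

Lemma chain_prod_ext {R : realType} (mul : R -> R -> R) (y y' : nat -> R) j :
  (forall i, (i <= j)%N -> y i = y' i) -> chain_prod mul y j = chain_prod mul y' j.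
Proof.
elim: j => [|j IH] yy' /=; first exact: yy'.
by rewrite IH ?yy' // => i le_ij; apply/yy'/leqW.
Qed.

Section ChainProduct.
Context {R : realType}.
Context {mul : R -> R -> R} {eps c : R}.
Hypothesis mul_range : forall a b, -1 <= a <= 1 -> -1 <= b <= 1 -> -1 <= mul a b <= 1.
Hypothesis mul_err : forall a b, -1 <= a <= 1 -> -1 <= b <= 1 -> `|mul a b - a * b| <= eps.
Hypothesis mul_lipschitz : forall a b a' b', -1 <= a <= 1 -> -1 <= b <= 1 ->
  -1 <= a' <= 1 -> -1 <= b' <= 1 -> `|mul a b - mul a' b'| <= c * (`|a - a'| + `|b - b'|).
Hypothesis c_ge1 : 1 <= c.
Implicit Types y : nat -> R.

Let cube_upto_pred {y j} : cube_upto y j.+1 -> cube_upto y j.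
Proof. by move=> y_cube i le_ij; apply/y_cube/leqW. Qed.

Lemma chain_prod_range {y j} : cube_upto y j -> -1 <= chain_prod mul y j <= 1.
Proof.
elim: j => [|j IH] y_cube /=; first exact: y_cube.
exact: mul_range _ _ (IH (cube_upto_pred y_cube)) (y_cube j.+1 (leqnn _)).
Qed.

Lemma chain_prod_err {y j} : cube_upto y j ->
  `|chain_prod mul y j - \prod_(i < j.+1) y i| <= j%:R * eps.
Proof.
elim: j => [|j IH] y_cube /=; first by rewrite big_ord1 subrr normr0 mul0r.
have y_cube' := cube_upto_pred y_cube.
have y_le1 : `|y j.+1| <= 1 by rewrite ler_norml; apply: y_cube.
have step_err := mul_err _ _ (chain_prod_range y_cube') (y_cube j.+1 (leqnn _)).
rewrite big_ord_recr /=.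
set p := chain_prod mul y j; set P := \prod_(i < j.+1) y i.
have -> : mul p (y j.+1) - P * y j.+1 = (mul p (y j.+1) - p * y j.+1) + (p - P) * y j.+1.
  by ring.
apply: le_trans (ler_normD _ _) _.
rewrite -natr1 [(_ + 1) * _]mulrDl mul1r addrC lerD // normrM.
by apply: le_trans (IH y_cube'); rewrite ler_piMr.
Qed.

Lemma chain_prod_lipschitz {y y' j} : cube_upto y j -> cube_upto y' j ->
  `|chain_prod mul y j - chain_prod mul y' j| <= c ^+ j * \sum_(i < j.+1) `|y i - y' i|.
Proof.
elim: j => [|j IH] y_cube y'_cube /=; first by rewrite expr0 mul1r big_ord1.
have y_cube1 := cube_upto_pred y_cube; have y'_cube1 := cube_upto_pred y'_cube.
apply: le_trans (mul_lipschitz _ _ _ _ (chain_prod_range y_cube1) (y_cube j.+1 (leqnn _))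
  (chain_prod_range y'_cube1) (y'_cube j.+1 (leqnn _))) _.
rewrite big_ord_recr /= exprS -mulrA.
have := IH y_cube1 y'_cube1.
set S := \sum_(i < j.+1) `|y i - y' i|; set D := `|y j.+1 - y' j.+1|.
move=> X_le; rewrite ler_wpM2l ?(le_trans ler01) // mulrDr lerD //.
by rewrite ler_peMl ?normr_ge0 // exprn_ege1.
Qed.

End ChainProduct.

Section ProductNetwork.
Context {R : realType}.
Variables (N L K : nat).
Hypotheses (N_gt0 : (0 < N)%N) (L_gt0 : (0 < L)%N).

(* Block j multiplies the running product in coordinate j - 1 into coordinate j. *)
Fixpoint mul_chain (j : nat) (s : 'cV[R]_K.+1) : 'cV[R]_K.+1 :=
  if j is j'.+1 then mul_block N L K.+1 (inord j') (inord j) (mul_chain j' s) else s.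

Definition prod_net (s : 'cV[R]_K.+1) : R := mul_chain K s (inord K) 0.

Local Notation width := (K.+1 + ((1 + N) + (1 + N)))%N.

Lemma NNvec_mul_chain j : NNvec width (j * L.+1) (mul_chain j).
Proof.
elim: j => [|j IH] /=; first exact/NNvec_of_affine/affine_id.
rewrite mulSn [(L.+1 + _)%N]addnC.
exact: NNvec_comp IH (NNvec_mul_block _ _ _ _ _ L_gt0).
Qed.

Lemma mul_chainE {s : 'cV[R]_K.+1} j : in_cube s -> (j <= K)%N ->
  [/\ in_cube (mul_chain j s),
      mul_chain j s (inord j) 0 = chain_prod (approx_mul N L) (fun i => s (inord i) 0) j &
      forall i : 'I_K.+1, (j < i)%N -> mul_chain j s i 0 = s i 0].
Proof.
move=> s_cube; elim: j => [|j IH] le_jK /=; first by split; rewrite // inord_val.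
have [t_cube t_head t_tail] := IH (ltnW le_jK).
rewrite mul_blockE //; split.
- move=> i; rewrite mxE; case: (i == inord j.+1) => //.
  exact: (approx_mul_range N_gt0 L (t_cube (inord j)) (t_cube (inord j.+1))).
- by rewrite mxE eqxx t_head t_tail // inordK.
- move=> i lt_ji; rewrite mxE; case: eqP => [i_eq | _]; last exact/t_tail/ltnW.
  by move: lt_ji; rewrite i_eq inordK // ltnn.
Qed.

Lemma prod_netE (s : 'cV[R]_K.+1) : in_cube s ->
  prod_net s = chain_prod (approx_mul N L) (fun i => s (inord i) 0) K.
Proof.
by move=> s_cube; rewrite /prod_net; have [_ -> _] := mul_chainE K s_cube (leqnn K).
Qed.

End ProductNetwork.

Section Factors.
Context {R : realType}.
Context {d : nat} (alpha : 'I_d -> nat).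

Definition factors : seq nat := flatten [seq nseq (alpha i) (nat_of_ord i) | i <- enum 'I_d].

(* Coordinate w of x, read as 0 when w >= d. *)
Definition coord (x : 'cV[R]_d) (w : nat) : R := \sum_(i < d) (if w == i then x i 0 else 0).

Definition factor_vec (m : nat) (x : 'cV[R]_d) : 'cV[R]_m :=
  \col_(j < m) coord x (nth 0%N factors j).

Lemma size_factors : size factors = (\sum_(i < d) alpha i)%N.
Proof.
rewrite size_flatten /shape -map_comp sumnE big_map big_enum /=.
by apply: eq_bigr => i _; rewrite size_nseq.
Qed.

Lemma sum_factors (F : nat -> R) :
  \sum_(j < size factors) F (nth 0%N factors j) = \sum_(i < d) F i *+ alpha i.
Proof.
have -> : \sum_(j < size factors) F (nth 0%N factors j) = \sum_(w <- factors) F w.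
  by rewrite (big_nth 0%N) big_mkord.
rewrite big_flatten big_map big_enum /=; apply: eq_bigr => i _; rewrite big_nseq.
by elim: (alpha i) => [|n IH] //=; rewrite IH mulrS.
Qed.

Lemma prod_factors (F : nat -> R) :
  \prod_(j < size factors) F (nth 0%N factors j) = \prod_(i < d) F i ^+ alpha i.
Proof.
have -> : \prod_(j < size factors) F (nth 0%N factors j) = \prod_(w <- factors) F w.
  by rewrite (big_nth 0%N) big_mkord.
rewrite big_flatten big_map big_enum /=; apply: eq_bigr => i _; rewrite big_nseq.
by elim: (alpha i) => [|n IH] //=; rewrite IH exprS.
Qed.

Lemma coord_ord x (i : 'I_d) : coord x i = x i 0.
Proof.
rewrite /coord (bigD1 i) //= eqxx big1 ?addr0 // => l ne_li.
by case: eqP => // /val_inj eq_il; rewrite eq_il eqxx in ne_li.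
Qed.

Lemma coord_cube x w : in_cube x -> -1 <= coord x w <= 1.
Proof.
move=> x_cube; have [lt_wd | le_dw] := ltnP w d.
  by rewrite -[w]/(nat_of_ord (Ordinal lt_wd)) coord_ord.
rewrite /coord big1 => [|i _]; first by rewrite lerN10 ler01.
by case: eqP => // eq_wi; move: (ltn_ord i); rewrite -eq_wi ltnNge le_dw.
Qed.

Lemma affine_factor_vec m : affine (factor_vec m).
Proof.
apply: affine_col_fun => j; apply: affine_form_sum => i.
by case: (_ == _); [exact: affine_form_coord | exact: affine_form_cst].
Qed.

End Factors.

Lemma invrX_double_le {F : realFieldType} (x : F) n : 1 <= x -> x ^- (2 * n) <= x ^- n.
Proof.
move=> x_ge1; have xn_ge1 : 1 <= x ^+ n by apply: exprn_ege1.
have xn_gt0 : 0 < x ^+ n by apply: lt_le_trans xn_ge1.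
rewrite mulnC exprM expr2 lef_pV2 ?posrE ?mulr_gt0 //.
by rewrite ler_peMl // ltW.
Qed.

Definition monomial_net {R : realType} {d} (alpha : 'I_d -> nat) (N L K : nat)
  (x : 'cV[R]_d) : R := prod_net N L K (factor_vec alpha K.+1 x).

Section MonomialNetwork.
Context {R : realType} {d : nat} (alpha : 'I_d -> nat) {N L K : nat}.
Hypotheses (deg_alpha : (\sum_(i < d) alpha i)%N = K.+1)
  (N_gt0 : (0 < N)%N) (L_gt0 : (0 < L)%N).
Implicit Types x y : 'cV[R]_d.

Local Notation factor x := (fun j => coord x (nth 0%N (factors alpha) j)).

Let size_factorsE : size (factors alpha) = K.+1.
Proof. by rewrite size_factors. Qed.

Let factor_cube {x} : in_cube x -> cube_upto (factor x) K.
Proof. by move=> x_cube j _; apply: coord_cube. Qed.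

Lemma NN_monomial_net :
  NN (K.+1 + ((1 + N) + (1 + N))) (K * L.+1) (monomial_net alpha N L K : 'cV[R]_d -> R).
Proof.
exists (K * L.+1)%N => //; apply: NNexact_entry.
exact: NNvec_comp_affine (NNvec_mul_chain N L K L_gt0 K) (affine_factor_vec alpha _).
Qed.

Lemma monomial_netE {x} : in_cube x ->
  monomial_net alpha N L K x = chain_prod (approx_mul N L) (factor x) K.
Proof.
move=> x_cube; rewrite /monomial_net prod_netE //; last by move=> j; rewrite mxE coord_cube.
by apply: chain_prod_ext => j le_jK; rewrite mxE inordK.
Qed.

Lemma monomial_net_range {x} : in_cube x -> -1 <= monomial_net alpha N L K x <= 1.
Proof.
move=> x_cube; rewrite monomial_netE //.
exact: (chain_prod_range (approx_mul_range N_gt0 L) (factor_cube x_cube)).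
Qed.

Lemma monomial_net_err {x} : in_cube x ->
  `|monomial_net alpha N L K x - monomial alpha x| <= K%:R * (N%:R ^- (2 * L) / 4).
Proof.
move=> x_cube; rewrite monomial_netE //.
have -> : monomial alpha x = \prod_(j < K.+1) factor x j.
  by rewrite -size_factorsE prod_factors; apply: eq_bigr => i _; rewrite coord_ord.
exact: (chain_prod_err (approx_mul_range N_gt0 L) (approx_mul_err N_gt0 L)
  (factor_cube x_cube)).
Qed.

Lemma monomial_net_lipschitz {x y} : in_cube x -> in_cube y ->
  `|monomial_net alpha N L K x - monomial_net alpha N L K y| <=
    3 ^+ K * (\max_(i < d) alpha i)%:R * norm1 (x - y).
Proof.
move=> x_cube y_cube; rewrite !monomial_netE //.
apply: le_trans (chain_prod_lipschitz (approx_mul_range N_gt0 L)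
  (approx_mul_lipschitz N_gt0 L) _ (factor_cube x_cube) (factor_cube y_cube)) _.
  by rewrite ler1n.
rewrite -size_factorsE (sum_factors alpha (fun w : nat => `|coord x w - coord y w|)).
rewrite -mulrA ler_wpM2l ?exprn_ge0 // /norm1 mulr_sumr ler_sum // => i _.
rewrite !coord_ord !mxE -[_ *+ alpha i]mulr_natl ler_wpM2r // ler_nat.
exact: leq_bigmax.
Qed.

End MonomialNetwork.

Theorem corollary33 (R : realType) (d : nat) (alpha : 'I_d -> nat) (k : nat)
  (hk : k = (\sum_(i < d) alpha i)%N) (hk2 : (2 <= k)%N)
  (W L : nat) (hW : (1 <= W)%N) (hL : (1 <= L)%N) :
  exists phi : 'cV[R]_d -> R,
    NN (9 * W + k - 1) ((k - 1) * (L + 1)) phi /\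
    forall x y : 'cV[R]_d, in_cube x -> in_cube y ->
      (-1 <= phi x <= 1) /\
      (`|phi x - monomial alpha x| <= 6 * (k - 1)%:R * (W%:R ^- L)) /\
      (`|phi x - phi y| <= 7 ^+ (k - 1) * (\max_(i < d) alpha i)%:R * norm1 (x - y)).
Proof.
case: k hk hk2 => [|K] // deg_alpha _; rewrite (subn1 K.+1) /=.
exists (monomial_net alpha W L K); split.
  by apply: NN_mono (NN_monomial_net alpha hL); lia.
move=> x y x_cube y_cube; split; [|split].
- exact: monomial_net_range.
- apply: le_trans (monomial_net_err alpha (esym deg_alpha) hW hL x_cube) _.
  have err_le : W%:R ^- (2 * L) <= W%:R ^- L :> R by apply: invrX_double_le; rewrite ler1n.
  have err_ge0 : 0 <= W%:R ^- (2 * L) :> R by rewrite invr_ge0 exprn_ge0.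
  by rewrite [6 * _]mulrC -mulrA ler_wpM2l //; lra.
- apply: le_trans (monomial_net_lipschitz alpha (esym deg_alpha) hW hL x_cube y_cube) _.
  rewrite -!mulrA ler_wpM2r ?mulr_ge0 ?ler0n ?sumr_ge0 //.
  by rewrite lerXn2r ?nnegrE //; lra.
Qed.
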